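(* Let $\alpha,\beta\in R$ with $\beta$ a long root and $(\alpha,\beta)=0$. Then there exist $\gamma,\gamma'\in R$ with $\gamma\notin\{\alpha,\beta\}$ such that $\alpha+\beta=\gamma+\gamma'$.
   Context: $R$ is the root system of a complex simple Lie algebra, with $(\cdot,\cdot)$ the invariant form induced by the Killing form; in the simply laced case all roots are long. *)

From HB Require Import structures.
From mathcomp Require Import all_boot all_order all_algebra.
Set Implicit Arguments. Unset Strict Implicit. Unset Printing Implicit Defensive.
Import Order.TTheory GRing.Theory Num.Theory.
Local Open Scope ring_scope.

Definition dot (F : realFieldType) (n : nat) (u v : 'rV[F]_n) : F :=
  \sum_(i < n) u 0 i * v 0 i.

Definition cartan (F : realFieldType) (n : nat) (b a : 'rV[F]_n) : F :=
  2 * dot b a / dot a a.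

(* R is an irreducible reduced crystallographic root system in F^n,
   i.e. the root system of a complex simple Lie algebra. *)
Definition irred_root_system (F : realFieldType) (n : nat) (R : seq 'rV[F]_n) : Prop :=
  R != [::] /\ (0 : 'rV[F]_n) \notin R /\
  [/\ (forall v : 'rV[F]_n, exists c : nat -> F,
          v = \sum_(i < size R) c i *: R`_i),
      (forall a b, a \in R -> b \in R -> b - cartan b a *: a \in R),
      (forall a b, a \in R -> b \in R -> exists k : int, cartan b a = k%:~R),
      (forall a (c : F), a \in R -> c *: a \in R -> c = 1 \/ c = -1)
    & (forall P : pred 'rV[F]_n,
          (forall a b, a \in R -> b \in R -> P a -> ~~ P b -> dot a b = 0) ->
          all P R \/ all (predC P) R)].

Definition long_root (F : realFieldType) (n : nat) (R : seq 'rV[F]_n) (b : 'rV[F]_n) : Prop :=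
  b \in R /\ forall a, a \in R -> dot a a <= dot b b.

(* Let a, b be roots with b long and (a, b) = 0.  By irreducibility some root
   z is orthogonal to neither a nor b; reflecting z in a if necessary, and
   then negating, yields a root d with (d, a) < 0 < (d, b).  Two roots with
   negative inner product that are not opposite sum to a root, so
   g := a + d and g' := b - d are roots with a + b = g + g'.  Clearly g <> a,
   and g = b would make d = b - a a root strictly longer than the long root b. *)

From HB Require Import structures.
From mathcomp Require Import all_boot all_order all_algebra.
Import Order.TTheory GRing.Theory Num.Theory.
Local Open Scope ring_scope.

Section InnerProduct.
Context {F : realFieldType} {n : nat}.
Implicit Types u v w : 'rV[F]_n.

Lemma dotC u v : dot u v = dot v u.
Proof. by rewrite /dot; apply: eq_bigr => i _; rewrite mulrC. Qed.

Lemma dotDl u v w : dot (u + v) w = dot u w + dot v w.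
Proof. by rewrite /dot -big_split; apply: eq_bigr => i _; rewrite mxE mulrDl. Qed.

Lemma dotZl (c : F) u w : dot (c *: u) w = c * dot u w.
Proof. by rewrite /dot mulr_sumr; apply: eq_bigr => i _; rewrite mxE mulrA. Qed.

Lemma dotNl u w : dot (- u) w = - dot u w.
Proof. by rewrite -scaleN1r dotZl mulN1r. Qed.

Lemma dotBl u v w : dot (u - v) w = dot u w - dot v w.
Proof. by rewrite dotDl dotNl. Qed.

Lemma dotZr (c : F) u w : dot w (c *: u) = c * dot w u.
Proof. by rewrite !(dotC w) dotZl. Qed.

Lemma dotNr u w : dot w (- u) = - dot w u.
Proof. by rewrite !(dotC w) dotNl. Qed.

Lemma dotBr u v w : dot w (u - v) = dot w u - dot w v.
Proof. by rewrite !(dotC w) dotBl. Qed.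

Lemma dot_ge0 u : 0 <= dot u u.
Proof. by apply: sumr_ge0 => i _; rewrite -expr2 sqr_ge0. Qed.

Lemma dot_gt0 {u} : u != 0 -> 0 < dot u u.
Proof.
move=> u_nz; rewrite lt_def dot_ge0 andbT; apply: contraNneq u_nz => u0.
apply/eqP/matrixP => i j; rewrite mxE (ord1 i).
have sq_ge0 (k : 'I_n) : true -> 0 <= u 0 k * u 0 k.
  by move=> _; rewrite -expr2 sqr_ge0.
by have /eqP := psumr_eq0P sq_ge0 u0 (i := j) isT; rewrite mulf_eq0 orbb => /eqP.
Qed.

End InnerProduct.

Section RootSystem.
Context {F : realFieldType} {n : nat} {R : seq 'rV[F]_n}.
Hypothesis HR : irred_root_system R.
Implicit Types x y z u v : 'rV[F]_n.

Lemma root_nz {x} : x \in R -> x != 0.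
Proof. by case: HR => _ [R0 _] xR; apply: contraNneq R0 => <-. Qed.

Lemma root_gt0 {x} : x \in R -> 0 < dot x x.
Proof. by move/root_nz/dot_gt0. Qed.

Lemma root_neq0 {x} : x \in R -> dot x x != 0.
Proof. by move=> /root_gt0 /lt0r_neq0. Qed.

Lemma refl_root {x y} : x \in R -> y \in R -> x - cartan x y *: y \in R.
Proof. by move=> xR yR; case: HR => _ [_ [_ refl _ _ _]]; exact: refl yR xR. Qed.

Lemma cartan_int {x y} : x \in R -> y \in R -> exists k : int, cartan x y = k%:~R.
Proof. by move=> xR yR; case: HR => _ [_ [_ _ int _ _]]; exact: int yR xR. Qed.

Lemma reduced {x} {c : F} : x \in R -> c *: x \in R -> c = 1 \/ c = -1.
Proof. by move=> xR cR; case: HR => _ [_ [_ _ _ red _]]; exact: red x c xR cR. Qed.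

Lemma dot_refl_self x y : y \in R -> dot (x - cartan x y *: y) y = - dot x y.
Proof.
move=> yR; rewrite dotBl dotZl /cartan divfK ?root_neq0 //.
by rewrite mulr_natl mulr2n opprD addNKr.
Qed.

Lemma dot_refl_orth x {y w} : dot y w = 0 -> dot (x - cartan x y *: y) w = dot x w.
Proof. by move=> yw; rewrite dotBl dotZl yw mulr0 subr0. Qed.

(* R = - R, since s_x x = - x. *)
Lemma neg_root {x} : x \in R -> - x \in R.
Proof.
move=> xR; have := refl_root xR xR.
have -> : cartan x x = 2 by rewrite /cartan mulfK // root_neq0.
by rewrite scaler_nat mulr2n opprD addNKr.
Qed.

(* Cauchy-Schwarz is strict for non-proportional roots; by reducedness the
   only roots proportional to v are v and - v. *)
Lemma strict_cauchy_schwarz {u v} : u \in R -> v \in R -> u != v -> u != - v ->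
  dot u v * dot u v < dot u u * dot v v.
Proof.
move=> uR vR neq_uv neq_uNv; set t := dot u v / dot v v.
have w_nz : u - t *: v != 0.
  rewrite subr_eq0; apply/eqP => u_tv; move: (uR); rewrite u_tv.
  move=> /(reduced vR) [] t1; move: u_tv; rewrite t1 ?scale1r ?scaleN1r => u_v.
    by rewrite u_v eqxx in neq_uv.
  by rewrite u_v eqxx in neq_uNv.
have v_perp_w : dot v (u - t *: v) = 0.
  by rewrite dotBr dotZr /t divfK ?root_neq0 // dotC subrr.
have := dot_gt0 w_nz.
rewrite dotBl dotZl v_perp_w mulr0 subr0 dotBr dotZr subr_gt0.
by rewrite /t mulrAC ltr_pdivrMr ?root_gt0.
Qed.

Lemma obtuse_cartan {x y} : x \in R -> y \in R -> dot x y < 0 ->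
  cartan x y = -1 \/ dot x y <= - dot y y.
Proof.
move=> xR yR xy_lt0; have yy_gt0 := root_gt0 yR.
have [[m|[|m]] cxy] := cartan_int xR yR; move: cxy; rewrite /cartan => cxy.
- have : 0 <= 2 * dot x y / dot y y by rewrite cxy ler0n.
  by rewrite ler_pdivlMr // mul0r pmulr_rge0 ?ltr0n // leNgt xy_lt0.
- by left; rewrite cxy NegzE mulrNz.
- right; have : 2 * dot x y / dot y y <= - 2.
    by rewrite cxy NegzE mulrNz lerN2 pmulrn ler_nat.
  by rewrite ler_pdivrMr // mulNr -mulrN ler_pM2l ?ltr0n.
Qed.

(* If (u, v) < 0 and u <> - v then u + v is a root: by strict Cauchy-Schwarz
   one of the Cartan numbers <u, v^vee>, <v, u^vee> equals -1, and the
   corresponding reflection maps one root to u + v. *)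
Lemma obtuse_sum_root {u v} : u \in R -> v \in R -> dot u v < 0 -> u != - v ->
  u + v \in R.
Proof.
move=> uR vR uv_lt0 neq_uNv.
have neq_uv : u != v by apply: contraTneq uv_lt0 => ->; rewrite -leNgt dot_ge0.
case: (obtuse_cartan uR vR uv_lt0) => [cuv|uv_le].
  by have := refl_root uR vR; rewrite cuv scaleN1r opprK.
case: (obtuse_cartan vR uR); first by rewrite dotC.
  by move=> cvu; have := refl_root vR uR; rewrite cvu scaleN1r opprK addrC.
rewrite dotC => vu_le; have := strict_cauchy_schwarz uR vR neq_uv neq_uNv.
rewrite -mulrNN mulrC ltNge => /negP; case.
by apply: ler_pM; rewrite ?dot_ge0 // lerNr.
Qed.

(* The set of roots y admitting such a common root with a is closed under
   non-orthogonality, so by irreducibility it is all of R. *)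
Lemma common_nonorthogonal_root {a b} : a \in R -> b \in R ->
  exists2 z, z \in R & (dot z a != 0) && (dot z b != 0).
Proof.
move=> aR bR.
pose P y := has (fun z => (dot z a != 0) && (dot z y != 0)) R.
have P_closed x y : x \in R -> y \in R -> P x -> ~~ P y -> dot x y = 0.
  move=> xR yR /hasP [z zR /andP [za zx]] nPy; apply/eqP.
  apply: contraNT nPy => xy; apply/hasP.
  have [zy|zy] := eqVneq (dot z y) 0; last by exists z; rewrite ?za.
  have [xa|xa] := eqVneq (dot x a) 0; last by exists x; rewrite ?xa.
  (* s_x z keeps its a-component and acquires a nonzero y-component *)
  exists (z - cartan z x *: x); first exact: refl_root.
  rewrite (dot_refl_orth _ xa).
  rewrite za dotBl dotZl zy sub0r oppr_eq0 /= /cartan.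
  by rewrite !mulf_neq0 ?invr_eq0 ?(root_neq0 xR) ?pnatr_eq0.
case: HR => _ [_ [_ _ _ _ irr]].
case: (irr P P_closed) => /allP allP.
  by have /hasP [z zR zab] := allP b bR; exists z.
by have /hasPn /(_ a aR) := allP a aR; rewrite /= root_neq0.
Qed.

Lemma orthogonal_separating_root {a b} : a \in R -> b \in R -> dot a b = 0 ->
  exists2 d, d \in R & dot d a < 0 < dot d b.
Proof.
move=> aR bR ab.
have [z zR /andP [za zb]] := common_nonorthogonal_root aR bR.
have [y yR y_lt0] : exists2 y, y \in R & dot y a * dot y b < 0.
  case: (ltgtP (dot z a * dot z b) 0) => [|zab|]; first by exists z.
  - exists (z - cartan z a *: a); first exact: refl_root.
    by rewrite dot_refl_self // dot_refl_orth // mulNr oppr_lt0.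
  - by move/eqP; rewrite mulf_eq0 (negbTE za) (negbTE zb).
case: (ltgtP (dot y a) 0) => [ya|ya|ya].
- by exists y; rewrite // ya /= -(nmulr_rlt0 _ ya).
- exists (- y); first exact: neg_root.
  by rewrite !dotNl oppr_lt0 ya /= oppr_gt0 -(pmulr_rlt0 _ ya).
- by move: y_lt0; rewrite ya mul0r ltxx.
Qed.

(* Length: if b is long and a is a root orthogonal to it, then b - a, whose
   squared length is (a, a) + (b, b) > (b, b), is not a root. *)
Lemma long_sub_orthogonal_not_root {a b} : a \in R -> long_root R b ->
  dot a b = 0 -> b - a \notin R.
Proof.
move=> aR [_ b_long] ab; apply/negP => /b_long.
rewrite dotBl !dotBr ab (dotC b a) ab subr0 sub0r opprK gerDl.
by rewrite leNgt root_gt0.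
Qed.

End RootSystem.

Theorem lemma2p5 (F : realFieldType) (n : nat) (R : seq 'rV[F]_n)
  (a b : 'rV[F]_n) :
  irred_root_system R -> a \in R -> b \in R -> long_root R b ->
  dot a b = 0 ->
  exists g g' : 'rV[F]_n,
    [/\ g \in R, g' \in R, g \notin [:: a; b] & a + b = g + g'].
Proof.
move=> HR aR bR b_long ab.
have [d dR /andP [da db]] := orthogonal_separating_root HR aR bR ab.
have a_neq_Nd : a != - d.
  by apply: contraTneq db => a_Nd; rewrite -[d]opprK -a_Nd dotNl ab oppr0 ltxx.
have b_neq_d : b != - - d.
  by rewrite opprK; apply: contraTneq da => <-; rewrite dotC ab ltxx.
exists (a + d), (b - d); split.
- by apply: obtuse_sum_root; rewrite // dotC.
- by apply: obtuse_sum_root; rewrite ?neg_root // dotNr dotC oppr_lt0.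
- rewrite !inE negb_or -subr_eq0 addrC addKr (root_nz HR dR) /=.
  apply: contraNneq (long_sub_orthogonal_not_root HR aR b_long ab).
  by move=> <-; rewrite addrC addKr.
- by rewrite addrACA subrr addr0.
Qed.
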